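(* Let $q$ be a prime power, let $\lambda \in \mathbb{F}_{q^n}\setminus\mathbb{F}_q$, $t = [\mathbb{F}_q(\lambda):\mathbb{F}_q]$, let $\overline{S}$ be an $\mathbb{F}_{q^t}$-subspace of $\mathbb{F}_{q^n}$ of $\mathbb{F}_{q^t}$-dimension $l>0$, $b \in \mathbb{F}_{q^n}^*$ with $\mathbb{F}_{q^t}\cap b\overline{S}=\{0\}$, $0<m<t$, $k = tl+m$ with $t+1 \le k \le n$, and $S = \overline{S} \oplus b\langle 1, \lambda, \ldots, \lambda^{m-1}\rangle_{\mathbb{F}_q}$, with $Y=\langle S\rangle_{\mathbb{F}_{q^t}} = \mathbb{F}_{q^n}$ and $2m > t$. Suppose $\mathcal{C}=\mathrm{Orb}(S)$ is an $r$-FWS code with $r = 2m+t(l-1)$. Then \[ \omega_{2i}(\mathcal{C}) = \begin{cases} (q + 1)q^{2i-1}, & \text{if } i \in \{1, \ldots, t - m - 1\}, \\ \frac{q^n - q^{2(t-m)-1}}{q - 1}, & \text{if } i = t - m. \end{cases} \]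
   Context: $\mathrm{Orb}(S)=\{\alpha S:\alpha\in\mathbb{F}_{q^n}^*\}$; $d(U,V)=2k-2\dim_{\mathbb{F}_q}(U\cap V)$; the weight distribution is $\omega_{2i}(\mathcal{C})=|\{\alpha S: \alpha\in\mathbb{F}_{q^n}^*, d(S,\alpha S)=2i\}|$ for $i=1,\dots,k$. $\mathcal{C}$ is an $r$-FWS code if $\omega_{2i}=0$ for $i=k-r+1,\ldots,k$ and $\omega_{2i}\neq 0$ for all $i=1,\ldots,k-r$. $\langle S\rangle_{\mathbb{F}_{q^t}}$ denotes the $\mathbb{F}_{q^t}$-span of $S$. *)

From HB Require Import structures.
From mathcomp Require Import all_boot all_order all_algebra all_field.
Set Implicit Arguments. Unset Strict Implicit. Unset Printing Implicit Defensive.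
Import GRing.Theory.
Local Open Scope ring_scope.

Section Orbit.
Variables (F : finFieldType) (L : fieldExtType F).

Definition mulsp (a : L) (S : {vspace L}) : {vspace L} := (<[a]> * S)%VS.

(* subspace distance d(U,V) = 2 dim U - 2 dim(U cap V)  (for dim U = dim V = k) *)
Definition sdist (U V : {vspace L}) : nat := (2 * \dim U - 2 * \dim (U :&: V))%N.

(* omega_{2i}(Orb S) = #{ alpha S : alpha in L^*, d(S, alpha S) = 2 i } *)
Definition orb_weight (S : {vspace L}) (i : nat) : nat :=
  size (undup (map (fun a : L => mulsp a S)
    [seq a <- enum (finvect_type L) |
       (a != 0) && (sdist S (mulsp a S) == 2 * i)%N])).

Definition FWS (S : {vspace L}) (r : nat) : Prop :=
  (forall i, (\dim S - r < i <= \dim S)%N -> orb_weight S i = 0%N) /\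
  (forall i, (1 <= i <= \dim S - r)%N -> orb_weight S i <> 0%N).

End Orbit.

From HB Require Import structures.
From mathcomp Require Import all_boot all_order all_algebra all_field.
From mathcomp Require Import zify.
Set Implicit Arguments. Unset Strict Implicit. Unset Printing Implicit Defensive.
Import GRing.Theory.
Local Open Scope ring_scope.

(* Write K = F_q(lam), t = [K : F_q] and P_s for the F_q-span of 1, lam, ..., lam^(s-1).
   For a in K^*, the height h of a is the least h such that a = A(lam) / C(lam) with
   deg A, deg C <= h; then 2h <= t, and Euclidean division of polynomials of degree < t
   shows dim (P_s :&: a P_s) = s - min(h, t - s).  Double counting the pairs (a, x) with
   x in P_s :&: a P_s, and comparing consecutive s, shows that q^t - q^(2s+1) elements of
   K^* have height > s.
   For S = Sbar + b P_m and a in K^*, a Sbar = Sbar gives dim (S :&: a S) =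
   tl + dim (P_m :&: a P_m).  For a outside K, a Sbar is not contained in Sbar, since
   otherwise Sbar would be a vector space over K(a), whose degree divides both
   dim Sbar = tl and n = tl + t; hence S + a S is the whole field.  So d(S, a S) is
   2 min(h, t - m) or 2 (t - m), and a S = a' S exactly when a / a' lies in F_q^*. *)

Section PolynomialSizes.
Variable R : idomainType.

Lemma size_polyM_le (f g : {poly R}) m n :
  (size f <= m)%N -> (size g <= n.+1)%N -> (size (f * g)%R <= m + n)%N.
Proof. by move=> sf sg; apply: leq_trans (size_polyMleq _ _) _; lia. Qed.

Lemma size_mul_eq_lt (f g r A : {poly R}) :
  f * g = r * A -> A != 0 -> (size r < size g)%N -> (size f < size A)%N.
Proof.
move=> e A0 rg; have [->|f0] := eqVneq f 0; first by rewrite size_poly0 size_poly_gt0.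
have g0 : g != 0 by rewrite -size_poly_gt0 (leq_ltn_trans _ rg).
have r0 : r != 0 by apply: contraNneq (mulf_neq0 f0 g0) => r0; rewrite e r0 mul0r.
have : size (f * g) = size (r * A) by rewrite e.
by rewrite !size_mul //; move: f0 g0 r0 A0 rg; rewrite -!size_poly_gt0; lia.
Qed.

Lemma size_mul_maxn_le (h A C : {poly R}) n s :
  A != 0 -> C != 0 -> maxn (size A) (size C) = n.+1 ->
  (size (h * A)%R <= s)%N -> (size (h * C)%R <= s)%N -> (size h <= s - n)%N.
Proof.
move=> A0 C0 sAC; have [->|h0] := eqVneq h 0; first by rewrite size_poly0.
by rewrite !size_mul //; move: h0 A0 C0 sAC; rewrite -!size_poly_gt0; lia.
Qed.

End PolynomialSizes.

Section LineProducts.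
Variables (F : fieldType) (L : fieldExtType F).

Lemma memv_line_prodP (a x : L) (V : {vspace L}) :
  reflect (exists2 u, u \in V & x = u * a) (x \in (<[a]> * V)%VS).
Proof. by rewrite prodvC; apply: memv_cosetP. Qed.

Lemma dim_line_prodv (a : L) (V : {vspace L}) : a != 0 -> \dim (<[a]> * V) = \dim V.
Proof. by move=> a0; rewrite prodvC dim_cosetv. Qed.

Lemma dim_capv_ge (X W V : {vspace L}) :
  (X <= V)%VS -> (W <= V)%VS -> (\dim X + \dim W <= \dim (X :&: W) + \dim V)%N.
Proof.
move=> XV WV; rewrite -dimv_sum_cap addnC leq_add2l dimvS //.
by rewrite subv_add XV WV.
Qed.

End LineProducts.

Section PowerSpans.
Variables (F : fieldType) (L : fieldExtType F) (lam : L).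
Local Notation K := <<1%VS; lam>>%VS.
Local Notation t := (\dim K).
Local Notation ev := (horner_alg lam).

Definition pspan s : {vspace L} := span [seq lam ^+ j | j <- iota 0 s].

Lemma horner_alg_sum (p : {poly F}) s :
  (size p <= s)%N -> ev p = \sum_(i < s) p`_i *: lam ^+ i.
Proof.
move=> sp; rewrite /horner_alg /horner_morph (horner_coef_wide (n := s)).
  by apply: eq_bigr => i _; rewrite coef_map mulr_algl.
apply: leq_trans _ sp; exact/eq_leq/(size_map_poly (in_alg L) p).
Qed.

Lemma horner_alg_small_eq0 (p : {poly F}) : (size p <= t)%N -> ev p = 0 -> p = 0.
Proof.
move=> sp p0; apply/eqP; rewrite -(map_poly_eq0 (in_alg L)).
rewrite -(root_small_adjoin_poly (K := 1%AS) (x := lam)) ?alg_polyOver //; first exact/rootP.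
rewrite adjoin_degreeE dimv1 divn1; apply: leq_trans _ sp.
exact/eq_leq/(size_map_poly (in_alg L) p).
Qed.

Lemma horner_alg_small_inj (p r : {poly F}) :
  (size p <= t)%N -> (size r <= t)%N -> ev p = ev r -> p = r.
Proof.
move=> sp sr e; apply/eqP; rewrite -subr_eq0; apply/eqP/horner_alg_small_eq0.
  by rewrite (leq_trans (size_polyD _ _)) // geq_max size_polyN sp.
by rewrite rmorphB /= e subrr.
Qed.

Lemma pspan_tuple s : pspan s = span [tuple lam ^+ i | i < s].
Proof. by rewrite /pspan -val_enum_ord -map_comp. Qed.

Lemma mem_pspanP s x :
  reflect (exists2 p : {poly F}, (size p <= s)%N & x = ev p) (x \in pspan s).
Proof.
rewrite pspan_tuple; apply: (iffP idP) => [/coord_span -> | [p sp ->]].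
  pose c i := oapp (coord [tuple lam ^+ i | i < s]^~ x) 0 (insub i).
  exists (\poly_(i < s) c i); first exact: size_poly.
  rewrite (horner_alg_sum (size_poly _ _)); apply: eq_bigr => i _.
  by rewrite coef_poly ltn_ord /c valK nth_mktuple.
rewrite (horner_alg_sum sp); apply: rpred_sum => i _; apply: rpredZ.
by apply/memv_span/tnthP; exists i; rewrite tnth_mktuple.
Qed.

Lemma horner_alg_pspan (p : {poly F}) s : (size p <= s)%N -> ev p \in pspan s.
Proof. by move=> sp; apply/mem_pspanP; exists p. Qed.

Lemma dim_pspan s : (s <= t)%N -> \dim (pspan s) = s.
Proof.
move=> st; rewrite pspan_tuple; apply/eqP.
rewrite -[X in _ == X](size_tuple [tuple lam ^+ i | i < s]); apply/freeP => k k0 i.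
pose p := \poly_(j < s) oapp k 0 (insub j).
have /polyP/(_ i) : p = 0.
  apply: horner_alg_small_eq0; first exact: leq_trans (size_poly _ _) st.
  rewrite -[RHS]k0 (horner_alg_sum (size_poly _ _)); apply: eq_bigr => j _.
  by rewrite coef_poly ltn_ord valK -tnth_nth tnth_mktuple.
by rewrite coef_poly ltn_ord valK coef0.
Qed.

Lemma pspan1 : pspan 1 = 1%VS.
Proof. by rewrite /pspan /= span_seq1 expr0. Qed.

Lemma pspanS s s' : (s <= s')%N -> (pspan s <= pspan s')%VS.
Proof.
move=> le; apply/subvP => _ /mem_pspanP [p sp ->].
by apply: horner_alg_pspan; apply: leq_trans le.
Qed.

Lemma pspan_sub s : (pspan s <= K)%VS.
Proof. by apply/span_subvP => _ /mapP [j _ ->]; apply/rpredX/memv_adjoin. Qed.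

End PowerSpans.

Section Overlap.
Variables (F : fieldType) (L : fieldExtType F) (lam : L).
Local Notation K := <<1%VS; lam>>%VS.
Local Notation t := (\dim K).
Local Notation ev := (horner_alg lam).
Local Notation pspan := (pspan lam).

Definition overlap (a : L) s := \dim (pspan s :&: <[a]> * pspan s).

Definition height_bound (a : L) e := (0 < overlap a e.+1)%N || (t <= e)%N.

Lemma height_exists (a : L) : exists e, height_bound a e.
Proof. by exists t; rewrite /height_bound leqnn orbT. Qed.

(* The disjunct [t <= e] only makes the minimum exist for every [a]; for [a] in K^* the
   first disjunct already holds at [e = t./2] (see [height_double_le]). *)
Definition height (a : L) := ex_minn (height_exists a).

Lemma adjoin_dim_gt0 : (0 < t)%N.
Proof. exact: (adim_gt0 <<1%VS; lam>>%AS). Qed.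

Lemma overlap0 a : overlap a 0 = 0%N.
Proof.
by rewrite /overlap /pspan /= span_nil cap0v dimv0.
Qed.

Variable a : L.
Hypotheses (aK : a \in K) (a0 : a != 0).

Lemma line_prod_pspan_sub s : (<[a]> * pspan s <= K)%VS.
Proof.
apply/subvP => _ /memv_line_prodP [u /(subvP (pspan_sub lam s)) uK ->].
exact: rpredM.
Qed.

Lemma overlap_lower s : (s <= t)%N -> (s + s <= overlap a s + t)%N.
Proof.
move=> st; have := dim_capv_ge (pspan_sub lam s) (line_prod_pspan_sub s).
by rewrite dim_line_prodv // dim_pspan.
Qed.

Lemma height_double_le : (2 * height a <= t)%N.
Proof.
rewrite /height; case: ex_minnP => h _ min.
have t_gt0 := adjoin_dim_gt0; have st : (t./2.+1 <= t)%N by lia.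
suff : (h <= t./2)%N by lia.
by apply: min; apply/orP; left; have := overlap_lower st; lia.
Qed.

Lemma height_lt : (height a < t)%N.
Proof. by have := height_double_le; have := adjoin_dim_gt0; lia. Qed.

Lemma overlap_height : (0 < overlap a (height a).+1)%N.
Proof.
have := height_lt; rewrite /height; case: ex_minnP => h /orP [//|].
by move=> /leq_ltn_trans H _ /H; rewrite ltnn.
Qed.

Lemma overlap_eq0 s : (s <= height a)%N -> overlap a s = 0%N.
Proof.
case: s => [_|s]; first exact: overlap0.
rewrite /height; case: ex_minnP => h _ min lt; apply/eqP; rewrite -leqn0 leqNgt.
by apply/negP => pos; have := min s; rewrite /height_bound pos => /(_ isT); lia.
Qed.

Lemma pspan_height_cap0 x u : x \in pspan (height a) -> u \in pspan (height a) ->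
  x = u * a -> x = 0.
Proof.
move=> xP uP e; apply/eqP; rewrite -memv0.
have /eqP := overlap_eq0 (leqnn (height a)); rewrite dimv_eq0 => /eqP <-.
by rewrite memv_cap xP; apply/memv_line_prodP; exists u.
Qed.

Lemma height_pair : exists A C : {poly F}, [/\ ev A = ev C * a, A != 0, C != 0 &
  maxn (size A) (size C) = (height a).+1].
Proof.
have := overlap_height; rewrite /overlap lt0n dimv_eq0 -vpick0.
have := memv_pick (pspan (height a).+1 :&: <[a]> * pspan (height a).+1)%VS.
set x := vpick _; rewrite memv_cap => /andP [/mem_pspanP [A sA eA]].
case/memv_line_prodP => _ /mem_pspanP [C sC ->] exC x0.
have eAC : ev A = ev C * a by rewrite -eA.
have A0 : A != 0 by apply: contraNneq x0 => A0; rewrite eA A0 rmorph0.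
have C0 : C != 0 by apply: contraNneq x0 => C0; rewrite exC C0 rmorph0 mul0r.
exists A, C; split => //; apply/eqP; rewrite eqn_leq geq_max sA sC /=.
rewrite leqNgt ltnS geq_max; apply/negP => /andP [sA' sC'].
have := pspan_height_cap0 (horner_alg_pspan lam sA') (horner_alg_pspan lam sC') eAC.
by apply/eqP; rewrite -eA.
Qed.

Section HeightPair.
Variables A C : {poly F}.
Hypotheses (eAC : ev A = ev C * a) (A0 : A != 0) (C0 : C != 0)
  (sAC : maxn (size A) (size C) = (height a).+1).

Let sA : (size A <= (height a).+1)%N. Proof. by rewrite -sAC leq_maxl. Qed.
Let sC : (size C <= (height a).+1)%N. Proof. by rewrite -sAC leq_maxr. Qed.

Lemma height_pair_dvd (f g : {poly F}) s : (size f <= s)%N -> (size g <= s)%N ->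
  (s + height a <= t)%N -> ev f = ev g * a -> exists2 h, f = h * A & g = h * C.
Proof.
move=> sf sg st efg.
have fCgA : f * C = g * A.
  apply: (horner_alg_small_inj (lam := lam)); rewrite ?(leq_trans (size_polyM_le _ _) st) //.
  by rewrite !rmorphM /= efg eAC -mulrA [a * _]mulrC.
pose h := g %/ C; pose r := g %% C; pose f' := f - h * A.
have egr : g = h * C + r by apply: divp_eq.
have ef'r : f' * C = r * A.
  by rewrite mulrBl fCgA {1}egr mulrDl addrC mulrAC addKr.
have evC0 : ev C != 0.
  apply: contra C0 => /eqP/horner_alg_small_eq0 -> //.
  by apply: leq_trans sC _; apply: height_lt.
have evf'r : ev f' = ev r * a.
  by apply: (mulIf evC0); rewrite -rmorphM /= ef'r rmorphM /= eAC mulrA mulrAC.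
have sr : (size r < size C)%N by rewrite ltn_modp.
have sf' : (size f' <= height a)%N by rewrite -ltnS (leq_trans (size_mul_eq_lt ef'r A0 sr) sA).
have sr' : (size r <= height a)%N by rewrite -ltnS (leq_trans sr).
have ht := ltnW height_lt.
have f'0 : f' = 0.
  apply: horner_alg_small_eq0; first exact: leq_trans sf' ht.
  exact: pspan_height_cap0 (horner_alg_pspan lam sf') (horner_alg_pspan lam sr') evf'r.
have r0 : r = 0.
  apply: horner_alg_small_eq0; first exact: leq_trans sr' ht.
  by apply/eqP; move: evf'r; rewrite f'0 rmorph0 => /esym/eqP; rewrite mulf_eq0 (negPf a0) orbF.
by exists h; [apply/eqP; rewrite -subr_eq0 -/f' f'0 | rewrite egr r0 addr0].
Qed.

Lemma pspan_cap_line_prod s : (height a <= s)%N -> (s + height a <= t)%N ->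
  (pspan s :&: <[a]> * pspan s)%VS = (<[ev A]> * pspan (s - height a))%VS.
Proof.
move=> hs st; apply/vspaceP => y; apply/idP/idP.
  rewrite memv_cap => /andP [/mem_pspanP [f sf ->]].
  case/memv_line_prodP => _ /mem_pspanP [g sg ->] efg.
  have [h fh gh] := height_pair_dvd sf sg st efg.
  apply/memv_line_prodP; exists (ev h); last by rewrite fh rmorphM.
  by apply/horner_alg_pspan/(size_mul_maxn_le A0 C0 sAC); rewrite -?fh -?gh.
case/memv_line_prodP => _ /mem_pspanP [h sh ->] ->.
have shA : (size (h * A)%R <= s)%N by apply: leq_trans (size_polyM_le sh sA) _; lia.
have shC : (size (h * C)%R <= s)%N by apply: leq_trans (size_polyM_le sh sC) _; lia.
rewrite memv_cap -rmorphM horner_alg_pspan //=; apply/memv_line_prodP.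
by exists (ev (h * C)); rewrite ?horner_alg_pspan // !rmorphM /= eAC mulrA.
Qed.

End HeightPair.

Lemma overlapE s : (s + height a <= t)%N -> overlap a s = (s - height a)%N.
Proof.
move=> st; have [sh|hs] := leqP s (height a).
  by rewrite overlap_eq0 //; apply/esym/eqP; rewrite subn_eq0.
have [A [C [eAC A0 C0 sAC]]] := height_pair.
have evA0 : ev A != 0.
  apply: contra A0 => /eqP/horner_alg_small_eq0 -> //.
  by apply: leq_trans _ height_lt; rewrite -sAC leq_maxl.
rewrite /overlap (pspan_cap_line_prod eAC A0 C0 sAC (ltnW hs) st).
by rewrite dim_line_prodv // dim_pspan //; lia.
Qed.

Lemma overlap_leD s' s : (s' <= s <= t)%N ->
  (overlap a s <= overlap a s' + 2 * (s - s'))%N.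
Proof.
case/andP => s's st; set X := (pspan s :&: <[a]> * pspan s)%VS.
have Y1 := dim_capv_ge (capvSl (pspan s) (<[a]> * pspan s)) (pspanS lam s's).
have Y2 := dim_capv_ge (subv_trans (capvSl X (pspan s')) (capvSr (pspan s) _))
  (prodvSr <[a]>%VS (pspanS lam s's)).
have Y3 : (\dim (X :&: pspan s' :&: <[a]> * pspan s') <= overlap a s')%N.
  by apply/dimvS/capvS; first exact: capvSr.
move: Y1 Y2 Y3; rewrite !dim_line_prodv // !dim_pspan ?(leq_trans s's) // -/X.
by rewrite /overlap -/X; lia.
Qed.

Lemma overlap_minE s : (s <= t)%N -> overlap a s = (s - minn (height a) (t - s))%N.
Proof.
move=> st; have hd := height_double_le.
have [hts|tsh] := leqP (height a) (t - s).
  by rewrite overlapE; lia.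
have := overlap_leD (s' := t - height a) (s := s); have := overlap_lower st.
by rewrite [overlap a (t - _)]overlapE; lia.
Qed.

Lemma height_eq0 : (height a == 0%N) = (a \in 1%VS).
Proof.
apply/eqP/idP => [h0 | a1].
  have := overlap_height; rewrite h0 /overlap pspan1 lt0n dimv_eq0 -vpick0.
  have := memv_pick (1%VS :&: <[a]> * 1%VS); set x := vpick _.
  rewrite memv_cap => /andP [x1 /memv_line_prodP [u u1 xu]] x0.
  have u0 : u != 0 by apply: contraNneq x0 => u0; rewrite xu u0 mul0r.
  have -> : a = u^-1 * x by rewrite xu mulKf.
  by rewrite rpredM // rpredV.
apply/eqP; rewrite -leqn0 /height; case: ex_minnP => e _; apply.
apply/orP; left; rewrite /overlap lt0n dimv_eq0 pspan1; apply/eqP => cap0.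
have : a \in (1%VS :&: <[a]> * 1%VS)%VS.
  by rewrite memv_cap a1; apply/memv_line_prodP; exists 1; rewrite ?mem1v ?mul1r.
by rewrite cap0 memv0 (negPf a0).
Qed.

End Overlap.

Lemma card_pred_sum (T : finType) (P : pred T) : #|P| = (\sum_a P a)%N.
Proof.
by rewrite -(sum1_card P) big_mkcond; apply: eq_bigr => a _; rewrite unfold_in; case: (P a).
Qed.

Lemma card_predI_sum (T : finType) (A P : pred T) :
  #|[pred a in A | P a]| = (\sum_(a in A) P a)%N.
Proof.
rewrite card_pred_sum [RHS]big_mkcond /=; apply: eq_bigr => a _.
by case: (a \in A).
Qed.

Lemma card_uniform_fibers (U : finType) (V : eqType) (f : U -> V) (p : pred U) c :
  (forall a, p a -> #|[pred x | p x && (f x == f a)]| = c) ->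
  (size (undup (map f (filter p (enum U)))) * c)%N = #|p|.
Proof.
move=> fiber; set s := undup _.
have fs x : p x -> f x \in s by move=> px; rewrite mem_undup map_f // mem_filter px mem_enum.
rewrite card_pred_sum (eq_bigr (fun x => \sum_(v <- s) (p x && (f x == v)))%N); last first.
  move=> x _; case px: (p x); last by rewrite big1.
  rewrite -big_mkcond /= sum1_count (eq_count (a2 := pred1 (f x))) => [|v].
    by rewrite count_uniq_mem ?undup_uniq ?fs.
  by rewrite /= eq_sym.
rewrite exchange_big /= big_seq (eq_bigr (fun _ => c)) => [|v].
  by rewrite -big_seq big_const_seq count_predT iter_addn_0 mulnC.
rewrite mem_undup => /mapP [a]; rewrite mem_filter => /andP [pa _] ->.
by rewrite -(fiber a pa) card_pred_sum.
Qed.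

Lemma nat_recurrence_solve (q x Y N f0 f1 : nat) : (1 < q)%N -> (0 < x)%N -> (0 < Y)%N ->
  (f0 = (x - 1) * (x - 1) + (Y - 1))%N -> (f1 = (q * x - 1) * (q * x - 1) + (Y - 1))%N ->
  (f1 + q * N = q * f0 + N)%N -> (N + q * (x * x) = Y)%N.
Proof.
move=> q1 x0 Y0 E0 E1 E3.
have sq_pred z f : (0 < z)%N -> (f = (z - 1) * (z - 1) + (Y - 1))%N ->
    (f + 2 * z = z * z + Y)%N.
  by case: z => // z _ ->; rewrite subn1 /= mulSn mulnS; lia.
have {}E0 := sq_pred _ _ x0 E0.
have {}E1 := sq_pred _ _ (leq_trans x0 (leq_pmull _ (ltnW q1))) E1.
have E0q := congr1 (muln q) E0.
have : (q * (N + q * (x * x)) + Y = N + q * (x * x) + q * Y)%N by lia.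
nia.
Qed.

Section Counting.
Variables (F : finFieldType) (L : fieldExtType F).
Local Notation T := (finvect_type L).
Local Notation q := #|F|.

Definition nonzero_in (V : {vspace L}) : pred T := [pred x : T | (x \in V) && (x != 0)].

Lemma card_vspaceT (V : {vspace L}) : #|[pred x : T | x \in V]| = (q ^ \dim V)%N.
Proof. by rewrite -(card_vspace (T := T) V); apply: eq_card. Qed.

Lemma card_nonzero_in (V : {vspace L}) : #|nonzero_in V| = (q ^ \dim V - 1)%N.
Proof.
rewrite -card_vspaceT [in RHS](cardD1 0) inE mem0v add1n subn1 /=.
by apply: eq_card => x; rewrite !inE andbC.
Qed.

Lemma card_notin_vspace (V : {vspace L}) :
  #|[pred x : T | x \notin V]| = (q ^ \dim {:L} - q ^ \dim V)%N.
Proof.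
rewrite -!card_vspaceT.
have -> : #|[pred x : T | x \in fullv]| = #|T| by apply: eq_card => x; rewrite !inE memvf.
rewrite -(cardC [pred x : T | x \in V]) addKn.
by apply: eq_card => x; rewrite !inE.
Qed.

Lemma q_gt1 : (1 < q)%N.
Proof. exact: finNzRing_gt1. Qed.

Variable lam : L.
Local Notation K := <<1%VS; lam>>%VS.
Local Notation t := (\dim K).
Local Notation pspan := (pspan lam).
Local Notation overlap := (overlap lam).
Local Notation height := (height lam).

Lemma card_line_prod_pspan_mem s (x : T) : (s <= t)%N -> x \in nonzero_in (pspan s) ->
  #|[pred a in nonzero_in K | x \in (<[a]> * pspan s)%VS]| = (q ^ s - 1)%N.
Proof.
move=> st /andP [xP x0]; rewrite -[in RHS](dim_pspan st) -card_nonzero_in.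
have div_inj : injective (fun u : T => (x / u : T)) by move=> u v /(mulfI x0) /invr_inj.
rewrite -[in RHS](card_imset _ div_inj); apply: eq_card => a; rewrite inE.
apply/andP/imsetP => [[_ /memv_line_prodP [u uP xu]] | [u]].
  have u0 : u != 0 by apply: contraNneq x0 => u0; rewrite xu u0 mul0r.
  by exists u; rewrite ?inE ?uP // xu [u * a]mulrC mulfK.
rewrite inE => /andP [uP u0] ->; have PK := subvP (pspan_sub lam s).
split; first by rewrite /nonzero_in inE rpred_div ?PK // mulf_neq0 ?invr_eq0.
by apply/memv_line_prodP; exists u; rewrite // mulrC divfK.
Qed.

Lemma sum_overlap s : (s <= t)%N ->
  (\sum_(a in nonzero_in K) q ^ overlap a s = (q ^ s - 1) * (q ^ s - 1) + (q ^ t - 1))%N.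
Proof.
move=> st; have q_gt0 := ltnW q_gt1.
have capE a : (q ^ overlap a s = #|nonzero_in (pspan s :&: <[a]> * pspan s)| + 1)%N.
  by rewrite card_nonzero_in subnK // expn_gt0 q_gt0.
rewrite (eq_bigr _ (fun a _ => capE a)) big_split /= (sum1_card (nonzero_in K)).
rewrite card_nonzero_in; congr (_ + _)%N.
transitivity (\sum_(x in nonzero_in (pspan s)) (q ^ s - 1))%N; last first.
  by rewrite sum_nat_const card_nonzero_in dim_pspan.
under eq_bigr do rewrite -sum1_card big_mkcond /=.
rewrite exchange_big [RHS]big_mkcond /=; apply: eq_bigr => x _.
case: ifP => xP.
  rewrite -(card_line_prod_pspan_mem st xP) card_predI_sum; apply: eq_bigr => a _.
  by case/andP: xP => xP x0; rewrite !inE memv_cap xP x0 andbT.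
rewrite big1 // => a _; case: ifP => //; rewrite !inE memv_cap => /andP [/andP [xP' _] x0].
by move: xP; rewrite inE xP' x0.
Qed.

Lemma overlap_succ a s : a \in nonzero_in K -> (2 * s < t)%N ->
  (q ^ overlap a s.+1 + q * (s < height a) = q * q ^ overlap a s + (s < height a))%N.
Proof.
case/andP => aK a0 st; have hd := height_double_le (L := L) aK a0.
have [hs|sh] := leqP (height a) s.
  by rewrite !(overlapE (L := L) aK a0) ?subSn // ?expnS; lia.
by rewrite !(overlap_eq0 (L := L) aK a0) //; lia.
Qed.

Lemma card_height_gt s : (2 * s < t)%N ->
  #|[pred a in nonzero_in K | (s < height a)%N]| = (q ^ t - q ^ (2 * s).+1)%N.
Proof.
move=> st; rewrite card_predI_sum.
set N := (\sum_(a in _) _)%N.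
have step : (\sum_(a in nonzero_in K) q ^ overlap a s.+1 + q * N
    = q * \sum_(a in nonzero_in K) q ^ overlap a s + N)%N.
  by rewrite /N !big_distrr -!big_split; apply: eq_bigr => a aK; rewrite /= overlap_succ.
have pos k : (0 < q ^ k)%N by rewrite expn_gt0 ltnW ?q_gt1.
have s1t : (s.+1 <= t)%N by lia.
have E1 : (\sum_(a in nonzero_in K) q ^ overlap a s.+1
    = (q * q ^ s - 1) * (q * q ^ s - 1) + (q ^ t - 1))%N by rewrite -expnS sum_overlap.
have := nat_recurrence_solve q_gt1 (pos s) (pos t) (sum_overlap (ltnW s1t)) E1 step.
by rewrite expnS mul2n -addnn expnD; lia.
Qed.

Lemma card_height_eq i : (0 < i)%N -> (2 * i < t)%N ->
  #|[pred a in nonzero_in K | height a == i]| = (q ^ (2 * i).+1 - q ^ (2 * i).-1)%N.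
Proof.
move=> i0 it; have it' : (2 * i.-1 < t)%N by lia.
have gt0 := card_height_gt it'; have gt1 := card_height_gt it.
rewrite (_ : (2 * i.-1).+1 = (2 * i).-1) in gt0; last by lia.
rewrite !card_predI_sum in gt0 gt1 *.
have split : (\sum_(a in nonzero_in K) (i.-1 < height a)
    = \sum_(a in nonzero_in K) (height a == i) + \sum_(a in nonzero_in K) (i < height a))%N.
  by rewrite -big_split; apply: eq_bigr => a _ /=; case: (ltngtP i (height a)) => hi; lia.
have le1 : (q ^ (2 * i).-1 <= q ^ (2 * i).+1)%N by rewrite leq_exp2l ?q_gt1 //; lia.
have le2 : (q ^ (2 * i).+1 <= q ^ t)%N by rewrite leq_exp2l ?q_gt1.
move: gt1; rewrite split in gt0; move: gt0.
(* [set] identifies terms that differ only in their canonical instances, which [lia]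
   would otherwise treat as unrelated atoms. *)
set x := (\sum_(a in nonzero_in K) (i < height a))%N.
by set y := (\sum_(a in nonzero_in K) (height a == i))%N; lia.
Qed.

End Counting.

Section WeightDistribution.
Variables (F : finFieldType) (L : fieldExtType F) (lam : L).
Variables (Sbar : {vspace L}) (b : L) (l m : nat).
Local Notation K := <<1%VS; lam>>%VS.
Local Notation t := (\dim K).
Local Notation q := #|F|.
Local Notation T := (finvect_type L).
Local Notation B := (<[b]> * pspan lam m)%VS.
Local Notation S := (Sbar + B)%VS.
Hypotheses (KSbar : (K * Sbar <= Sbar)%VS) (dimSbar : \dim Sbar = (t * l)%N)
  (b0 : b != 0) (m_gt0 : (0 < m)%N) (m_lt : (m < t)%N) (dirS : directv S)
  (KS : (K * S)%VS = fullv) (t_lt : (t < 2 * m)%N).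

Lemma line_prod_Sbar a : a \in K -> a != 0 -> (<[a]> * Sbar)%VS = Sbar.
Proof.
move=> aK a0; apply/eqP; rewrite eqEdim dim_line_prodv // leqnn andbT.
by apply: subv_trans KSbar; apply: prodvSl; rewrite -memvE.
Qed.

Lemma Sbar_cap_line_prodK : (Sbar :&: <[b]> * K = 0)%VS.
Proof.
apply/eqP; rewrite -subv0; apply/subvP => x /memv_capP [xS /memv_line_prodP [u uK xu]].
rewrite memv0; have [u0|u0] := eqVneq u 0; first by rewrite xu u0 mul0r.
have bS : b \in Sbar.
  rewrite -(line_prod_Sbar (_ : u^-1 \in K) (invr_neq0 u0)) ?rpredV //.
  by apply/memv_line_prodP; exists x; rewrite // xu mulrAC mulfV // mul1r.
have BS : (B <= Sbar)%VS.
  apply/subvP => _ /memv_line_prodP [v vP ->]; apply: (subvP KSbar).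
  exact/memv_mul/bS/(subvP (pspan_sub lam m)).
have : (B <= 0)%VS by rewrite -(directv_addP dirS) subv_cap BS subvv.
rewrite subv0 -dimv_eq0 dim_line_prodv // dim_pspan ?(ltnW m_lt) // => /eqP m0.
by move: m_gt0; rewrite m0.
Qed.

Lemma dim_Sbar_add_line_prod X :
  (X <= K)%VS -> \dim (Sbar + <[b]> * X) = (t * l + \dim X)%N.
Proof.
move=> XK; have := dimv_sum_cap Sbar (<[b]> * X).
have -> : (Sbar :&: <[b]> * X = 0)%VS.
  by apply/eqP; rewrite -subv0 -Sbar_cap_line_prodK capvS ?prodvSr.
by rewrite dimv0 addn0 dim_line_prodv // dimSbar.
Qed.

Lemma dimS : \dim S = (t * l + m)%N.
Proof. by rewrite dim_Sbar_add_line_prod ?pspan_sub // dim_pspan // ltnW. Qed.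

Lemma fullv_Sbar_add : fullv = (Sbar + <[b]> * K)%VS.
Proof.
have KK : (K * K)%VS = K := prodv_id <<1%VS; lam>>%AS.
apply/eqP; rewrite eqEsubv subvf andbT -KS prodvDr subv_add.
rewrite (subv_trans KSbar (addvSl _ _)) /= prodvA (prodvC K <[b]>%VS) -prodvA.
apply/(subv_trans _ (addvSr _ _))/prodvSr.
by rewrite -[X in (_ <= X)%VS]KK prodvSr ?pspan_sub.
Qed.

Lemma dim_fullv : \dim {:L} = (t * l + t)%N.
Proof. by rewrite fullv_Sbar_add dim_Sbar_add_line_prod. Qed.

Lemma line_prod_Sbar_sub a : (<[a]> * Sbar <= Sbar)%VS -> a \in K.
Proof.
move=> aS; set E := <<K; a>>%AS.
have ES : (E * Sbar <= Sbar)%VS by apply: agenv_modl; rewrite prodvDl subv_add KSbar.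
have /field_module_dimS : (E * fullv <= fullv)%VS by rewrite subvf.
rewrite dim_fullv -dimSbar (dvdn_addr _ (field_module_dimS ES)) => /dvdn_leq.
rewrite adim_gt0 => /(_ isT) Et.
have KE : (K <= E)%VS by apply: subv_adjoin.
have -> : K = E :> {vspace L} by apply/eqP; rewrite eqEdim KE Et.
exact: memv_adjoin.
Qed.

Lemma addv_line_prodS a : a != 0 -> a \notin K -> (S + <[a]> * S)%VS = fullv.
Proof.
move=> a0 aK; apply/eqP; rewrite eqEsubv subvf /=.
have [_ /memv_line_prodP [y yS ->] ySbar] := subvPn (contraNN (@line_prod_Sbar_sub a) aK).
have : y * a \in fullv by rewrite memvf.
rewrite fullv_Sbar_add => /memv_addP [x xS [_ /memv_line_prodP [u uK ->] yau]].
have u0 : u != 0 by apply: contraNneq ySbar => u0; rewrite yau u0 mul0r addr0.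
have KSbarS w z : w \in K -> z \in Sbar -> w * z \in S.
  by move=> wK zS; apply/(subvP (addvSl _ _))/(subvP KSbar)/memv_mul.
rewrite subv_add (subv_trans (addvSl Sbar B) (addvSl _ _)) /=.
apply/subvP => _ /memv_line_prodP [v vK ->]; have vuK : v / u \in K by rewrite rpred_div.
have -> : v * b = v / u * (y * a) - v / u * x.
  by rewrite yau mulrDr addrAC subrr add0r mulrA divfK.
rewrite addrC memv_add ?rpredN ?KSbarS //; apply/memv_line_prodP.
by exists (v / u * y); rewrite ?KSbarS ?mulrA.
Qed.

Lemma dim_capS_notin a : a != 0 -> a \notin K ->
  (\dim (S :&: <[a]> * S) + t = t * l + 2 * m)%N.
Proof.
move=> a0 aK; have := dimv_sum_cap S (<[a]> * S).
by rewrite addv_line_prodS // dim_fullv dim_line_prodv // dimS; lia.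
Qed.

Lemma dim_capS_in a : a \in K -> a != 0 ->
  \dim (S :&: <[a]> * S) = (t * l + overlap lam a m)%N.
Proof.
move=> aK a0.
have SaS : (S + <[a]> * S = Sbar + <[b]> * (pspan lam m + <[a]> * pspan lam m))%VS.
  rewrite prodvDr line_prod_Sbar // prodvDr !prodvA (prodvC <[a]>%VS).
  by rewrite addvA [(Sbar + B + Sbar)%VS]addvC !addvA addvv -addvA.
have := dimv_sum_cap S (<[a]> * S); rewrite SaS dim_Sbar_add_line_prod; last first.
  by rewrite subv_add pspan_sub line_prod_pspan_sub.
have := dimv_sum_cap (pspan lam m) (<[a]> * pspan lam m).
rewrite !dim_line_prodv // dimS dim_pspan ?(ltnW m_lt) // /overlap.
set x := \dim (pspan lam m + _); set y := \dim (pspan lam m :&: _).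
set z := \dim (S :&: _).
lia.
Qed.

Definition dist_index (a : L) := if a \in K then minn (height lam a) (t - m) else (t - m)%N.

Lemma dim_capS_add_dist_index a : a != 0 ->
  (\dim (S :&: <[a]> * S) + dist_index a = t * l + m)%N.
Proof.
move=> a0; rewrite /dist_index; case: ifPn => aK; last by have := dim_capS_notin a0 aK; lia.
rewrite dim_capS_in // (overlap_minE aK a0 (ltnW m_lt)).
by have := geq_minr (height lam a) (t - m); lia.
Qed.

Lemma sdist_mulsp a : a != 0 -> sdist S (mulsp a S) = (2 * dist_index a)%N.
Proof.
move=> a0; have := dim_capS_add_dist_index a0; rewrite /sdist /mulsp dimS.
by set x := \dim (S :&: _); lia.
Qed.

Lemma dist_index_eq0 a : a != 0 -> (dist_index a == 0%N) = (a \in 1%VS).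
Proof.
move=> a0; rewrite /dist_index; case: ifPn => aK.
  by rewrite -(height_eq0 aK a0); apply/eqP/eqP; lia.
have -> : (a \in 1%VS) = false by apply: contraNF aK; apply: subvP; apply: sub1_agenv.
by apply/eqP; lia.
Qed.

Lemma mulsp_eq a a' : a != 0 -> a' != 0 -> (mulsp a S == mulsp a' S) = (a \in <[a']>%VS).
Proof.
move=> a0 a'0; rewrite /mulsp; apply/eqP/idP => [eaa' | /vlineP [k ka]]; last first.
  have k0 : k != 0 by apply: contraNneq a0 => k0; rewrite ka k0 scale0r.
  suff -> : <[a]>%VS = <[a']>%VS by [].
  by apply/eqP; rewrite eqEdim !dim_vline a0 a'0 leqnn andbT -memvE ka memvZ ?memv_line.
set c := a / a'; have c0 : c != 0 by rewrite mulf_neq0 ?invr_eq0.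
have cS : (<[c]> * S = S)%VS.
  by rewrite -prodv_line (prodvC <[a]>%VS) -prodvA eaa' prodvA prodv_line mulVf ?prod1v.
have dc0 : dist_index c = 0%N.
  by have := dim_capS_add_dist_index c0; rewrite cS capvv dimS; lia.
have /vlineP [k ck] : c \in 1%VS by rewrite -dist_index_eq0 // dc0.
apply/vlineP; exists k.
by rewrite -[a](divfK a'0) -/c ck -scalerAl mul1r.
Qed.

Lemma orb_weight_card i : (orb_weight S i * (q - 1))%N =
  #|[pred a : T | (a != 0) && (dist_index a == i)]|.
Proof.
have dist_pred (a : T) : (a != 0) && (sdist S (mulsp a S) == 2 * i)%N
    = (a != 0) && (dist_index a == i).
  by case: eqP => //= /eqP a0; rewrite sdist_mulsp //; apply/eqP/eqP; lia.
rewrite -(eq_card dist_pred) /orb_weight; apply: card_uniform_fibers => a /andP [a0 da].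
transitivity #|nonzero_in <[a]>|; last by rewrite card_nonzero_in dim_vline a0 expn1.
apply: eq_card => x; rewrite /nonzero_in !inE -andbA.
apply/and3P/andP => [[x0 _ /eqP xa] | [xa x0]].
  by rewrite -(mulsp_eq x0 a0) xa eqxx.
by move: (xa); rewrite -(mulsp_eq x0 a0) => /eqP ->.
Qed.

Lemma card_dist_index i : (0 < i < t - m)%N ->
  #|[pred a : T | (a != 0) && (dist_index a == i)]| = (q ^ (2 * i).+1 - q ^ (2 * i).-1)%N.
Proof.
case/andP => i0 itm; rewrite -(card_height_eq (lam := lam) i0); last by lia.
apply: eq_card => a; rewrite /dist_index /nonzero_in !inE.
case: (a \in K); last by rewrite (_ : (t - m == i)%N = false) ?andbF //; apply/eqP; lia.
by case: (a != 0) => //=; apply/eqP/eqP; lia.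
Qed.

Lemma card_dist_index_max :
  #|[pred a : T | (a != 0) && (dist_index a == t - m)%N]|
  = (q ^ \dim {:L} - q ^ (2 * (t - m)).-1)%N.
Proof.
transitivity (#|[pred a : T | a \notin K]|
    + #|[pred a in nonzero_in K | ((t - m).-1 < height lam a)%N]|)%N.
  rewrite [LHS]card_pred_sum card_predI_sum card_pred_sum [X in (_ + X)%N]big_mkcond.
  rewrite -big_split /=.
  apply: eq_bigr => a _; rewrite /dist_index /nonzero_in !inE.
  case: (boolP (a \in K)) => aK /=; last first.
    by rewrite eqxx andbT (_ : a != 0) //; apply: contraNneq aK => ->; apply: mem0v.
  by case: (a != 0) => //=; congr nat_of_bool; apply/eqP/idP; lia.
rewrite card_notin_vspace card_height_gt ?dim_fullv; last by lia.
rewrite (_ : (2 * (t - m).-1).+1 = (2 * (t - m)).-1); last by lia.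
have le1 : (q ^ (2 * (t - m)).-1 <= q ^ t)%N by rewrite leq_exp2l ?q_gt1 //; lia.
have le2 : (q ^ t <= q ^ (t * l + t))%N by rewrite leq_exp2l ?q_gt1 ?leq_addl.
move: le1 le2; set x := (q ^ (2 * (t - m)).-1)%N; set y := (q ^ t)%N.
by set z := (q ^ (t * l + t))%N; lia.
Qed.

Lemma orb_weight_small i : (1 <= i <= t - m - 1)%N ->
  orb_weight S i = ((q + 1) * q ^ (2 * i - 1))%N.
Proof.
move=> /andP [i0 itm]; have := orb_weight_card i.
rewrite card_dist_index ?i0 /=; last by lia.
rewrite (_ : (2 * i).+1 = (2 * i).-1 + 2)%N; last by lia.
rewrite (_ : 2 * i - 1 = (2 * i).-1)%N; last by lia.
move=> E; apply/eqP; rewrite -(eqn_pmul2r (_ : 0 < q - 1)%N) ?subn_gt0 ?q_gt1 // E.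
rewrite -mulnA (mulnC (q ^ _)%N) mulnA (mulnC (q + 1)%N) -subn_sqr.
by rewrite exp1n mulnBl mul1n expnD mulnC.
Qed.

Lemma orb_weight_max :
  ((q - 1) * orb_weight S (t - m) = q ^ \dim {:L} - q ^ (2 * (t - m) - 1))%N.
Proof. by rewrite mulnC orb_weight_card card_dist_index_max subn1. Qed.

End WeightDistribution.

Theorem theorem4p12 (F : finFieldType) (L : fieldExtType F)
  (lam : L) (Sbar : {vspace L}) (b : L) (l m : nat) (S : {vspace L}) :
  let q := #|F| in
  let n := \dim {:L} in
  let Fqt := <<1%VS; lam>>%VS in
  let t := \dim Fqt in
  let k := (t * l + m)%N in
  let B := (<[b]> * span [seq (lam ^+ j)%R | j <- iota 0 m])%VS in
  lam \notin 1%VS ->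
  (Fqt * Sbar <= Sbar)%VS ->
  \dim Sbar = (t * l)%N -> (0 < l)%N ->
  b != 0 ->
  (Fqt :&: <[b]> * Sbar = 0)%VS ->
  (0 < m < t)%N ->
  (t.+1 <= k <= n)%N ->
  directv (Sbar + B) ->
  S = (Sbar + B)%VS ->
  (Fqt * S)%VS = fullv ->
  (t < 2 * m)%N ->
  FWS S (2 * m + t * (l - 1)) ->
  (forall i, (1 <= i <= t - m - 1)%N ->
     orb_weight S i = ((q + 1) * q ^ (2 * i - 1))%N) /\
  ((q - 1) * orb_weight S (t - m) = q ^ n - q ^ (2 * (t - m) - 1))%N.
Proof.
move=> q n K t k B _ KSbar dimSbar _ b0 _ /andP [m_gt0 m_lt] _ dirS -> KS t_lt _.
split; first exact: (orb_weight_small KSbar dimSbar b0 m_gt0 m_lt dirS KS t_lt).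
exact: (orb_weight_max KSbar dimSbar b0 m_gt0 m_lt dirS KS t_lt).
Qed.
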